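(* A Möbius transformation of $\mathcal A_2^{(0,1)}\cup\{\infty\}$ fixes both $-1$ and $1$ if and only if its Vahlen matrices $\pm A$ are of the form $$A=\begin{pmatrix}\cosh x&\sinh x\\ \sinh x&\cosh x\end{pmatrix}\quad\text{for some }x\in\mathcal A_2.$$
   Context: $\mathcal A_2$ is the real associative algebra generated by $e_1,e_2$ with $e_1^2=e_2^2=-1$, $e_1e_2=-e_2e_1$ (basis $1,e_1,e_2,e_1e_2$). For $a=a_0+a_1e_1+a_2e_2+a_{12}e_1e_2$ let $a^*=a_0+a_1e_1+a_2e_2-a_{12}e_1e_2$ (the reverse involution, $(ab)^*=b^*a^*$). $\mathcal A_2^{(0,1)}=\mathbb R+\mathbb Re_1+\mathbb Re_2$. $\exp x=\sum_{m\ge0}x^m/m!$, $\cosh x=\tfrac12(\exp x+\exp(-x^* ))$, $\sinh x=\tfrac12(\exp x-\exp(-x^* ))$. A Vahlen matrix is $\begin{pmatrix}a&b\\c&d\end{pmatrix}$ with $a,b,c,d\in\mathcal A_2$, $ad^*-bc^*=1$ and $ab^*,cd^*\in\mathcal A_2^{(0,1)}$; it acts on $\mathcal A_2^{(0,1)}\cup\{\infty\}$ by $x\mapsto(ax+b)(cx+d)^{-1}$, $\infty\mapsto ac^{-1}$. The Möbius transformations (conformal orientation-preserving automorphisms) of $\mathcal A_2^{(0,1)}\cup\{\infty\}$ are exactly these maps, each given by exactly two Vahlen matrices $\pm A$. *)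

From Stdlib Require Import Reals Factorial.
From Coquelicot Require Import Coquelicot.
Open Scope R_scope.

(** The algebra A_2 = R<e1,e2 | e1^2 = e2^2 = -1, e1 e2 = - e2 e1>,
    elements a0 + a1 e1 + a2 e2 + a12 e1e2 stored by coordinates. *)
Record A2 := mkA2 { c0 : R; c1 : R; c2 : R; c12 : R }.

Definition a2zero : A2 := mkA2 0 0 0 0.
Definition a2one  : A2 := mkA2 1 0 0 0.
Definition a2real (r : R) : A2 := mkA2 r 0 0 0.
Definition a2add (a b : A2) : A2 :=
  mkA2 (c0 a + c0 b) (c1 a + c1 b) (c2 a + c2 b) (c12 a + c12 b).
Definition a2opp (a : A2) : A2 := mkA2 (- c0 a) (- c1 a) (- c2 a) (- c12 a).
Definition a2sub (a b : A2) : A2 := a2add a (a2opp b).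
Definition a2scale (r : R) (a : A2) : A2 :=
  mkA2 (r * c0 a) (r * c1 a) (r * c2 a) (r * c12 a).

(** Product, from the multiplication table of the basis 1, e1, e2, e12:
    e1e1 = e2e2 = e12e12 = -1, e1e2 = e12, e2e1 = -e12,
    e1e12 = -e2, e12e1 = e2, e2e12 = e1, e12e2 = -e1. *)
Definition a2mul (a b : A2) : A2 :=
  mkA2 (c0 a * c0 b - c1 a * c1 b - c2 a * c2 b - c12 a * c12 b)
       (c0 a * c1 b + c1 a * c0 b + c2 a * c12 b - c12 a * c2 b)
       (c0 a * c2 b - c1 a * c12 b + c2 a * c0 b + c12 a * c1 b)
       (c0 a * c12 b + c1 a * c2 b - c2 a * c1 b + c12 a * c0 b).

Definition a2star (a : A2) : A2 := mkA2 (c0 a) (c1 a) (c2 a) (- c12 a).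

Definition a2normsq (a : A2) : R :=
  c0 a * c0 a + c1 a * c1 a + c2 a * c2 a + c12 a * c12 a.
Definition a2inv (a : A2) : A2 :=
  a2scale (/ a2normsq a) (mkA2 (c0 a) (- c1 a) (- c2 a) (- c12 a)).

Definition paravector (a : A2) : Prop := c12 a = 0.

Fixpoint a2pow (x : A2) (m : nat) : A2 :=
  match m with O => a2one | S k => a2mul (a2pow x k) x end.
Fixpoint a2exp_partial (x : A2) (n : nat) : A2 :=
  match n with
  | O => a2zero
  | S k => a2add (a2exp_partial x k) (a2scale (/ INR (Factorial.fact k)) (a2pow x k))
  end.
Definition a2exp (x : A2) : A2 :=
  mkA2 (real (Lim_seq (fun n => c0 (a2exp_partial x n))))
       (real (Lim_seq (fun n => c1 (a2exp_partial x n))))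
       (real (Lim_seq (fun n => c2 (a2exp_partial x n))))
       (real (Lim_seq (fun n => c12 (a2exp_partial x n)))).

Definition a2cosh (x : A2) : A2 :=
  a2scale (/ 2) (a2add (a2exp x) (a2exp (a2opp (a2star x)))).
Definition a2sinh (x : A2) : A2 :=
  a2scale (/ 2) (a2sub (a2exp x) (a2exp (a2opp (a2star x)))).

Record Mat2 := mkMat2 { ma : A2; mb : A2; mc : A2; md : A2 }.
Definition mat_opp (A : Mat2) : Mat2 :=
  mkMat2 (a2opp (ma A)) (a2opp (mb A)) (a2opp (mc A)) (a2opp (md A)).

Definition vahlen (A : Mat2) : Prop :=
  a2sub (a2mul (ma A) (a2star (md A))) (a2mul (mb A) (a2star (mc A))) = a2one /\
  paravector (a2mul (ma A) (a2star (mb A))) /\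
  paravector (a2mul (mc A) (a2star (md A))).

(** Points of A_2^{(0,1)} ∪ {∞}: [Some x] is the finite point x, [None] is ∞. *)
Definition mobius (A : Mat2) (p : option A2) : option A2 :=
  match p with
  | Some x =>
      let den := a2add (a2mul (mc A) x) (md A) in
      if Req_EM_T (a2normsq den) 0 then None
      else Some (a2mul (a2add (a2mul (ma A) x) (mb A)) (a2inv den))
  | None =>
      if Req_EM_T (a2normsq (mc A)) 0 then None
      else Some (a2mul (ma A) (a2inv (mc A)))
  end.

Definition fixes (A : Mat2) (x : A2) : Prop := mobius A (Some x) = Some x.

Definition cosh_sinh_mat (x : A2) : Mat2 :=
  mkMat2 (a2cosh x) (a2sinh x) (a2sinh x) (a2cosh x).

(* If A fixes -1 and 1, the two fixed-point equations force d = a and c = b,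
   and the Vahlen condition becomes (a - b)(a + b)^* = 1.  Every invertible
   u in A_2 is an exponential: a unit pure vector n = n1 e1 + n2 e2 + n3 e12
   satisfies n^2 = -1, so R + R n is a copy of C, and
   exp (t + th n) = e^t (cos th + sin th n).  Writing a + b = exp x, the same
   formula gives exp (- x^* ) = ((exp x)^* )^-1 = a - b, hence a = cosh x and
   b = sinh x.  Conversely a matrix (a b; b a) fixes -1 and 1 as soon as
   a - b and a + b are invertible, which the Vahlen condition guarantees. *)

From Stdlib Require Import Reals Lra Lia Psatz Factorial.
From Coquelicot Require Import Coquelicot.
Open Scope R_scope.

Lemma A2_ext (a b : A2) :
  c0 a = c0 b -> c1 a = c1 b -> c2 a = c2 b -> c12 a = c12 b -> a = b.
Proof. destruct a, b; simpl; intros -> -> -> ->; reflexivity. Qed.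

Lemma A2_coords (a b : A2) :
  a = b -> c0 a = c0 b /\ c1 a = c1 b /\ c2 a = c2 b /\ c12 a = c12 b.
Proof. intros ->; auto. Qed.

Ltac a2_unfold :=
  unfold a2inv, a2normsq, a2sub, a2mul, a2add, a2opp, a2scale, a2star,
    a2real, a2one, a2zero in *;
  cbn [c0 c1 c2 c12] in *.

Ltac a2_ring := apply A2_ext; a2_unfold; ring.

Lemma a2mul_assoc p q r : a2mul (a2mul p q) r = a2mul p (a2mul q r).
Proof. a2_ring. Qed.

Lemma a2mul_1_l p : a2mul a2one p = p.
Proof. a2_ring. Qed.

Lemma a2mul_1_r p : a2mul p a2one = p.
Proof. a2_ring. Qed.

Lemma a2mul_add_distr_r p q r : a2mul (a2add p q) r = a2add (a2mul p r) (a2mul q r).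
Proof. a2_ring. Qed.

Lemma a2mul_scale_l r p q : a2mul (a2scale r p) q = a2scale r (a2mul p q).
Proof. a2_ring. Qed.

Lemma a2mul_real_add_r p t w :
  a2mul p (a2add (a2real t) w) = a2add (a2scale t p) (a2mul p w).
Proof. a2_ring. Qed.

Lemma a2scale_inj r p q : r <> 0 -> a2scale r p = a2scale r q -> p = q.
Proof.
  intros Hr H; apply A2_coords in H; unfold a2scale in H; cbn [c0 c1 c2 c12] in H.
  destruct H as (H0 & H1 & H2 & H3).
  apply A2_ext; eapply Rmult_eq_reg_l; eauto.
Qed.

Lemma a2opp_inj p q : a2opp p = a2opp q -> p = q.
Proof.
  intros H; apply A2_coords in H; a2_unfold; apply A2_ext; lra.
Qed.

Lemma a2normsq_star p : a2normsq (a2star p) = a2normsq p.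
Proof. a2_unfold; ring. Qed.

Lemma a2normsq_eq0 p : a2normsq p = 0 -> p = a2zero.
Proof. intros H; a2_unfold; apply A2_ext; cbn [c0 c1 c2 c12]; nra. Qed.

Lemma a2mul_inv_r p : a2normsq p <> 0 -> a2mul p (a2inv p) = a2one.
Proof. intros Hp; apply A2_ext; a2_unfold; field; exact Hp. Qed.

Lemma a2mul_inv_l p : a2normsq p <> 0 -> a2mul (a2inv p) p = a2one.
Proof. intros Hp; apply A2_ext; a2_unfold; field; exact Hp. Qed.

Lemma a2normsq_neq0_of_mul_eq1 p q :
  a2mul p q = a2one -> a2normsq p <> 0 /\ a2normsq q <> 0.
Proof.
  intros H; split; intros H0; apply a2normsq_eq0 in H0; subst;
    apply A2_coords in H; a2_unfold; lra.
Qed.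

Lemma a2_inv_unique p q r : a2mul p q = a2one -> a2mul q r = a2one -> p = r.
Proof.
  intros Hpq Hqr.
  rewrite <- (a2mul_1_r p), <- Hqr, <- a2mul_assoc, Hpq, a2mul_1_l.
  reflexivity.
Qed.

Definition exp_term (t : R) (j : nat) : R := t ^ j / INR (fact j).

Definition a2exp_term (x : A2) (m : nat) : A2 := a2scale (/ INR (fact m)) (a2pow x m).

(* Like [sum_f_R0], [a2sum f n] has the n + 1 terms [f 0], ..., [f n]. *)
Fixpoint a2sum (f : nat -> A2) (n : nat) : A2 :=
  match n with
  | O => f O
  | S k => a2add (a2sum f k) (f (S k))
  end.

Lemma a2mul_sum_l f y n : a2mul (a2sum f n) y = a2sum (fun j => a2mul (f j) y) n.
Proof.
  induction n as [|n IH]; simpl; [reflexivity|].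
  rewrite a2mul_add_distr_r, IH; reflexivity.
Qed.

Lemma a2exp_partial_S x N : a2exp_partial x (S N) = a2sum (a2exp_term x) N.
Proof.
  induction N as [|N IH].
  - apply A2_ext; simpl; ring.
  - change (a2exp_partial x (S (S N)))
      with (a2add (a2exp_partial x (S N)) (a2exp_term x (S N))).
    rewrite IH; reflexivity.
Qed.

Definition a2linear (g : A2 -> R) : Prop :=
  (forall p q, g (a2add p q) = g p + g q) /\ (forall r p, g (a2scale r p) = r * g p).

Lemma a2linear_coords :
  a2linear c0 /\ a2linear c1 /\ a2linear c2 /\ a2linear c12.
Proof. repeat split; reflexivity. Qed.

Lemma A2_ext_linear p q : (forall g, a2linear g -> g p = g q) -> p = q.
Proof.
  intros H; destruct a2linear_coords as (L0 & L1 & L2 & L3).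
  apply A2_ext; apply H; assumption.
Qed.

Lemma linear_a2sum g f n : a2linear g -> g (a2sum f n) = sum_f_R0 (fun j => g (f j)) n.
Proof.
  intros [g_add _]; induction n as [|n IH]; simpl; [reflexivity|].
  rewrite g_add, IH; reflexivity.
Qed.

Lemma exp_term_S t j : exp_term t (S j) * INR (S j) = t * exp_term t j.
Proof.
  unfold exp_term; rewrite fact_simpl, mult_INR; simpl pow.
  field; split; [apply INR_fact_neq_0 | apply not_0_INR; lia].
Qed.

Lemma a2exp_term_S x m : a2mul (a2exp_term x m) x = a2scale (INR (S m)) (a2exp_term x (S m)).
Proof.
  unfold a2exp_term; simpl a2pow; rewrite a2mul_scale_l, fact_simpl.
  apply A2_ext; a2_unfold; rewrite mult_INR;
    field; split; first [apply INR_fact_neq_0 | apply not_0_INR; lia].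
Qed.

(* The induction step of (t + w)^k / k! = sum_j t^j / j! * w^(k-j) / (k-j)!,
   read coordinatewise: [a] is [exp_term t] and [b (m+1)] stands for
   [b m * w / (m+1)]. *)
Lemma sum_convolution_step (a b : nat -> R) (t : R) (k : nat) :
  (forall j, a (S j) * INR (S j) = t * a j) ->
  sum_f_R0 (fun j => a j * (t * b (k - j)%nat + INR (S (k - j)) * b (S (k - j)))) k
  = INR (S k) * sum_f_R0 (fun j => a j * b (S k - j)%nat) (S k).
Proof.
  intros Ha; rewrite scal_sum.
  transitivity (sum_f_R0 (fun j => INR j * a j * b (S k - j)%nat) (S k)
     + sum_f_R0 (fun j => INR (S k - j) * a j * b (S k - j)%nat) (S k)).
  2:{ rewrite <- sum_plus; apply sum_eq; intros i Hi.
      assert (E : INR i + INR (S k - i) = INR (S k)) by (rewrite <- plus_INR; f_equal; lia).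
      rewrite <- E; ring. }
  rewrite (decomp_sum (fun j => INR j * a j * b (S k - j)%nat) (S k)) by lia.
  rewrite (tech5 (fun j => INR (S k - j) * a j * b (S k - j)%nat) k); simpl pred.
  rewrite Nat.sub_diag; change (INR 0) with 0.
  transitivity (sum_f_R0 (fun i => INR (S i) * a (S i) * b (S k - S i)%nat) k
      + sum_f_R0 (fun j => INR (S k - j) * a j * b (S k - j)%nat) k); [|ring].
  rewrite <- sum_plus; apply sum_eq; intros i Hi.
  replace (S k - S i)%nat with (k - i)%nat by lia.
  replace (S k - i)%nat with (S (k - i)) by lia.
  rewrite (Rmult_comm (INR (S i))), Ha; ring.
Qed.

Lemma a2exp_term_add_real t w k :
  a2exp_term (a2add (a2real t) w) k
  = a2sum (fun j => a2scale (exp_term t j) (a2exp_term w (k - j))) k.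
Proof.
  induction k as [|k IH].
  - apply A2_ext; unfold exp_term, a2exp_term; simpl; a2_unfold; field.
  - apply (a2scale_inj (INR (S k))); [apply not_0_INR; lia|].
    rewrite <- a2exp_term_S, IH, a2mul_sum_l.
    apply A2_ext_linear; intros g Hg.
    pose proof Hg as [g_add g_scale].
    rewrite g_scale, !linear_a2sum by exact Hg.
    rewrite (sum_eq (fun j => g (a2scale (exp_term t j) (a2exp_term w (S k - j))))
                   (fun j => exp_term t j * g (a2exp_term w (S k - j))))
      by (intros; apply g_scale).
    rewrite <- (sum_convolution_step _ (fun m => g (a2exp_term w m)) t) by apply exp_term_S.
    apply sum_eq; intros j _.
    rewrite a2mul_scale_l, a2mul_real_add_r, a2exp_term_S, g_scale, g_add, !g_scale.
    reflexivity.
Qed.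

(* [is_series_ext] with its side goals stated as equations in [R] rather than
   in a normed module, so that [ring] and [field] apply to them. *)
Lemma is_series_ext_R (a b : nat -> R) l :
  (forall n, a n = b n) -> is_series a l -> is_series b l.
Proof. apply is_series_ext. Qed.

Lemma is_series_exp_term t : is_series (exp_term t) (exp t).
Proof.
  eapply is_series_ext_R; [|exact (proj1 (is_pseries_R _ _ _) (is_exp_Reals t))].
  intros n; unfold exp_term; field; apply INR_fact_neq_0.
Qed.

Lemma ex_series_abs_exp_term t : ex_series (fun j => Rabs (exp_term t j)).
Proof.
  exists (exp (Rabs t)); eapply is_series_ext_R; [|exact (is_series_exp_term (Rabs t))].
  intros n; unfold exp_term.
  rewrite Rabs_div by apply INR_fact_neq_0.
  rewrite <- RPow_abs, (Rabs_right (INR _)); [reflexivity|apply Rle_ge, pos_INR].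
Qed.

Lemma Lim_seq_partial_sums (u s : nat -> R) l :
  (forall N, u (S N) = sum_f_R0 s N) -> is_series s l -> real (Lim_seq u) = l.
Proof.
  intros Hu Hs; rewrite <- Lim_seq_incr_1, (Lim_seq_ext _ (sum_n s)).
  - rewrite (is_lim_seq_unique _ l); [reflexivity | exact Hs].
  - intros n; rewrite Hu, sum_n_Reals; reflexivity.
Qed.

(* Each coordinate of [exp (t + w)] is the Cauchy product of the series of
   [exp t] and of that coordinate of [exp w]. *)
Lemma linear_a2exp_add_real g t w (L rho : R) :
  a2linear g ->
  is_series (fun m => g (a2exp_term w m)) L ->
  (forall m, Rabs (g (a2pow w m)) <= rho ^ m) ->
  real (Lim_seq (fun n => g (a2exp_partial (a2add (a2real t) w) n))) = exp t * L.
Proof.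
  intros Hg HL Hbound; pose proof Hg as [_ g_scale].
  apply Lim_seq_partial_sums
    with (s := fun k => sum_f_R0 (fun j => exp_term t j * g (a2exp_term w (k - j))) k).
  - intros N; rewrite a2exp_partial_S, linear_a2sum by exact Hg.
    apply sum_eq; intros k _.
    rewrite a2exp_term_add_real, linear_a2sum by exact Hg.
    apply sum_eq; intros j _; apply g_scale.
  - apply (is_series_mult (exp_term t) (fun m => g (a2exp_term w m)));
      [apply is_series_exp_term | exact HL | apply ex_series_abs_exp_term |].
    apply (@ex_series_le R_AbsRing R_CompleteNormedModule _ (exp_term rho));
      [| exists (exp rho); apply is_series_exp_term].
    intros m; change (norm (Rabs ?x)) with (Rabs (Rabs x)); rewrite Rabs_Rabsolu.
    unfold a2exp_term, exp_term; rewrite g_scale, Rabs_mult.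
    rewrite Rabs_inv, (Rabs_right (INR _)) by (apply Rle_ge, pos_INR).
    rewrite Rmult_comm; apply Rmult_le_compat_r; [|apply Hbound].
    apply Rlt_le, Rinv_0_lt_compat, INR_fact_lt_0.
Qed.

(* [ipow m] is [i ^ m] as a pair (real part, imaginary part). *)
Fixpoint ipow (m : nat) : R * R :=
  match m with
  | O => (1, 0)
  | S k => (- snd (ipow k), fst (ipow k))
  end.

Lemma ipow_SS m : ipow (S (S m)) = (- fst (ipow m), - snd (ipow m)).
Proof. reflexivity. Qed.

Lemma ipow_even_odd k :
  ipow (2 * k) = ((-1) ^ k, 0) /\ ipow (2 * k + 1) = (0, (-1) ^ k).
Proof.
  induction k as [|k [IHe IHo]]; [split; simpl; f_equal; ring|].
  replace (2 * S k + 1)%nat with (S (S (2 * k + 1))) by lia.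
  replace (2 * S k)%nat with (S (S (2 * k))) by lia.
  rewrite !ipow_SS, IHe, IHo; cbn [fst snd pow]; split; f_equal; ring.
Qed.

Lemma ipow_bound m : Rabs (fst (ipow m)) <= 1 /\ Rabs (snd (ipow m)) <= 1.
Proof.
  induction m as [|m IH]; cbn [ipow fst snd].
  - rewrite Rabs_R1, Rabs_R0; lra.
  - rewrite Rabs_Ropp; tauto.
Qed.

Lemma is_series_zero : is_series (fun _ : nat => 0) 0.
Proof.
  pose proof (is_series_scal_r 0 _ _ (is_series_exp_term 0)) as H.
  rewrite Rmult_0_r in H; eapply is_series_ext_R; [|exact H].
  intros n; cbv beta; ring.
Qed.

Lemma is_series_cos th :
  is_series (fun m => th ^ m / INR (fact m) * fst (ipow m)) (cos th).
Proof.
  assert (Heven : is_pseries (fun n => fst (ipow (2 * n)) / INR (fact (2 * n))) (th ^ 2) (cos th)).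
  { apply is_pseries_R; unfold cos; destruct (exist_cos (Rsqr th)) as [l Hl].
    apply is_series_Reals in Hl; rewrite <- Rsqr_pow2.
    eapply is_series_ext_R; [|exact Hl]; intros n.
    rewrite (proj1 (ipow_even_odd n)); reflexivity. }
  assert (Hodd : is_pseries (fun n => fst (ipow (2 * n + 1)) / INR (fact (2 * n + 1))) (th ^ 2) 0).
  { apply is_pseries_R; eapply is_series_ext_R; [|exact is_series_zero]; intros n.
    rewrite (proj2 (ipow_even_odd n)); cbn [fst]; field; apply INR_fact_neq_0. }
  pose proof (is_pseries_odd_even (fun m => fst (ipow m) / INR (fact m)) _ _ _ Heven Hodd) as H.
  apply is_pseries_R in H; rewrite Rmult_0_r, Rplus_0_r in H.
  eapply is_series_ext_R; [|exact H]; intros n; cbv beta; field; apply INR_fact_neq_0.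
Qed.

Lemma is_series_sin th :
  is_series (fun m => th ^ m / INR (fact m) * snd (ipow m)) (sin th).
Proof.
  unfold sin; destruct (exist_sin (Rsqr th)) as [l Hl].
  assert (Heven : is_pseries (fun n => snd (ipow (2 * n)) / INR (fact (2 * n))) (th ^ 2) 0).
  { apply is_pseries_R; eapply is_series_ext_R; [|exact is_series_zero]; intros n.
    rewrite (proj1 (ipow_even_odd n)); cbn [snd]; field; apply INR_fact_neq_0. }
  assert (Hodd : is_pseries (fun n => snd (ipow (2 * n + 1)) / INR (fact (2 * n + 1))) (th ^ 2) l).
  { apply is_pseries_R; apply is_series_Reals in Hl; rewrite <- Rsqr_pow2.
    eapply is_series_ext_R; [|exact Hl]; intros n.
    rewrite (proj2 (ipow_even_odd n)); cbn [snd]; unfold sin_n; field; apply INR_fact_neq_0. }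
  pose proof (is_pseries_odd_even (fun m => snd (ipow m) / INR (fact m)) _ _ _ Heven Hodd) as H.
  apply is_pseries_R in H; rewrite Rplus_0_l in H.
  eapply is_series_ext_R; [|exact H]; intros n; cbv beta; field; apply INR_fact_neq_0.
Qed.

Section PureVector.

Variables (n1 n2 n3 : R).
Hypothesis unit_n : n1 * n1 + n2 * n2 + n3 * n3 = 1.

(* The unit pure vector [n = n1 e1 + n2 e2 + n3 e12] squares to [-1], so
   [R + R n] is a copy of the complex numbers. *)
Lemma a2pow_pure th m :
  a2pow (mkA2 0 (th * n1) (th * n2) (th * n3)) m
  = a2scale (th ^ m)
      (mkA2 (fst (ipow m)) (snd (ipow m) * n1) (snd (ipow m) * n2) (snd (ipow m) * n3)).
Proof.
  induction m as [|m IH]; [apply A2_ext; simpl; ring|].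
  cbn [a2pow]; rewrite IH; cbn [ipow fst snd pow].
  apply A2_ext; a2_unfold; [|ring..].
  transitivity (- (th * th ^ m * snd (ipow m)) * (n1 * n1 + n2 * n2 + n3 * n3)); [ring|].
  rewrite unit_n; ring.
Qed.

Lemma Rabs_unit_coords : Rabs n1 <= 1 /\ Rabs n2 <= 1 /\ Rabs n3 <= 1.
Proof. repeat split; apply Rabs_le; split; nra. Qed.

Lemma a2exp_polar t th :
  a2exp (mkA2 t (th * n1) (th * n2) (th * n3))
  = a2scale (exp t) (mkA2 (cos th) (sin th * n1) (sin th * n2) (sin th * n3)).
Proof.
  set (w := mkA2 0 (th * n1) (th * n2) (th * n3)).
  replace (mkA2 t (th * n1) (th * n2) (th * n3)) with (a2add (a2real t) w) by (unfold w; a2_ring).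
  assert (Hterm : forall m, a2exp_term w m = a2scale (th ^ m / INR (fact m))
      (mkA2 (fst (ipow m)) (snd (ipow m) * n1) (snd (ipow m) * n2) (snd (ipow m) * n3))).
  { intros m; unfold a2exp_term, w, Rdiv; rewrite a2pow_pure; a2_ring. }
  assert (Hbound : forall c m, Rabs c <= 1 -> Rabs (th ^ m * c) <= Rabs th ^ m).
  { intros c m Hc; rewrite Rabs_mult, RPow_abs.
    rewrite <- (Rmult_1_r (Rabs (th ^ m))) at 2.
    apply Rmult_le_compat_l; [apply Rabs_pos | exact Hc]. }
  assert (Hbound_prod : forall c n, Rabs c <= 1 -> Rabs n <= 1 -> Rabs (c * n) <= 1).
  { intros c n Hc Hn; rewrite Rabs_mult.
    pose proof (Rabs_pos c); pose proof (Rabs_pos n); nra. }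
  destruct Rabs_unit_coords as (H1 & H2 & H3).
  destruct a2linear_coords as (L0 & L1 & L2 & L3).
  apply A2_ext; unfold a2exp; cbn [c0 c1 c2 c12 a2scale];
    (eapply linear_a2exp_add_real with (rho := Rabs th);
     [ assumption
     | eapply is_series_ext_R;
       [| first [ exact (is_series_cos th)
                | exact (is_series_scal_r _ _ _ (is_series_sin th)) ] ];
       intros m; rewrite Hterm; cbn [c0 c1 c2 c12 a2scale]; ring
     | intros m; unfold w; rewrite a2pow_pure; cbn [c0 c1 c2 c12 a2scale];
       apply Hbound; try apply Hbound_prod; try apply ipow_bound; assumption ]).
Qed.

End PureVector.

Lemma R3_polar v1 v2 v3 : exists rho n1 n2 n3,
  0 <= rho /\ n1 * n1 + n2 * n2 + n3 * n3 = 1 /\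
  v1 = rho * n1 /\ v2 = rho * n2 /\ v3 = rho * n3.
Proof.
  set (N := v1 * v1 + v2 * v2 + v3 * v3).
  destruct (Req_dec N 0) as [HN | HN].
  - exists 0, 1, 0, 0; unfold N in HN; repeat split; nra.
  - assert (Hpos : 0 < N) by (unfold N in *; nra).
    pose proof (sqrt_lt_R0 N Hpos) as Hr; pose proof (sqrt_sqrt N (Rlt_le _ _ Hpos)) as Hr2.
    exists (sqrt N), (v1 / sqrt N), (v2 / sqrt N), (v3 / sqrt N).
    repeat split; try lra; try (field; lra).
    set (s := sqrt N) in *.
    transitivity (N / (s * s)); [unfold N; field; lra|].
    rewrite Hr2; field; exact HN.
Qed.

Lemma R2_polar_upper a b : 0 <= b -> a * a + b * b <> 0 ->
  exists t th, a = exp t * cos th /\ b = exp t * sin th.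
Proof.
  intros Hb Hab.
  set (r := sqrt (a * a + b * b)).
  assert (Hr : 0 < r) by (apply sqrt_lt_R0; nra).
  assert (Hr2 : r * r = a * a + b * b) by (apply sqrt_sqrt; nra).
  assert (Hcos : -1 <= a / r <= 1).
  { split; [apply Rmult_le_reg_r with r|apply Rmult_le_reg_r with r]; try lra;
      unfold Rdiv; rewrite Rmult_assoc, Rinv_l by lra; nra. }
  assert (Hsin : sqrt (1 - (a / r)²) = b / r).
  { replace (1 - (a / r)²) with ((b / r)²).
    2:{ unfold Rsqr; rewrite <- (Rinv_r (r * r)) by nra; rewrite Hr2 at 1; field; lra. }
    apply sqrt_Rsqr; unfold Rdiv; apply Rmult_le_pos; [lra | apply Rlt_le, Rinv_0_lt_compat, Hr]. }
  exists (ln r), (acos (a / r)).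
  rewrite exp_ln, cos_acos, sin_acos, Hsin by assumption.
  split; field; lra.
Qed.

Lemma a2_polar_form x : exists t th n1 n2 n3,
  n1 * n1 + n2 * n2 + n3 * n3 = 1 /\ x = mkA2 t (th * n1) (th * n2) (th * n3).
Proof.
  destruct x as [x0 x1 x2 x12].
  destruct (R3_polar x1 x2 x12) as (th & n1 & n2 & n3 & _ & Hn & -> & -> & ->).
  exists x0, th, n1, n2, n3; split; [exact Hn | reflexivity].
Qed.

Lemma a2exp_surj u : a2normsq u <> 0 -> exists x, a2exp x = u.
Proof.
  intros Hu; destruct u as [u0 u1 u2 u12].
  destruct (R3_polar u1 u2 u12) as (s & n1 & n2 & n3 & Hs & Hn & -> & -> & ->).
  assert (Hus : u0 * u0 + s * s <> 0).
  { intros H0; apply Hu; unfold a2normsq; cbn [c0 c1 c2 c12].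
    transitivity (u0 * u0 + s * s * (n1 * n1 + n2 * n2 + n3 * n3)); [ring|].
    rewrite Hn; lra. }
  destruct (R2_polar_upper u0 s Hs Hus) as (t & th & -> & ->).
  exists (mkA2 t (th * n1) (th * n2) (th * n3)).
  rewrite a2exp_polar by exact Hn; a2_ring.
Qed.

Lemma a2exp_star_inv x : a2mul (a2star (a2exp x)) (a2exp (a2opp (a2star x))) = a2one.
Proof.
  destruct (a2_polar_form x) as (t & th & n1 & n2 & n3 & Hn & ->).
  replace (a2opp (a2star (mkA2 t (th * n1) (th * n2) (th * n3))))
    with (mkA2 (- t) (th * - n1) (th * - n2) (th * n3)) by a2_ring.
  rewrite !a2exp_polar by (try rewrite <- Hn; ring).
  rewrite exp_Ropp.
  pose proof (exp_pos t) as Ht; pose proof (sin2_cos2 th) as Htrig; unfold Rsqr in Htrig.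
  apply A2_ext; a2_unfold; [|field; lra..].
  transitivity (exp t * / exp t * (cos th * cos th + sin th * sin th * (n1 * n1 + n2 * n2 + n3 * n3)));
    [ring|].
  rewrite Hn, Rinv_r by lra; lra.
Qed.

Lemma vahlen_sym_mul a b :
  vahlen (mkMat2 a b b a) -> a2mul (a2sub a b) (a2star (a2add a b)) = a2one.
Proof.
  intros (Hdet & Hab & _); cbn [ma mb mc md] in Hdet, Hab; unfold paravector in Hab.
  apply A2_coords in Hdet; apply A2_ext; a2_unfold; lra.
Qed.

Lemma cosh_sinh_of_vahlen_sym a b :
  vahlen (mkMat2 a b b a) -> exists x, mkMat2 a b b a = cosh_sinh_mat x.
Proof.
  intros hA; pose proof (vahlen_sym_mul a b hA) as Hab.
  destruct (a2normsq_neq0_of_mul_eq1 _ _ Hab) as [_ Hplus].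
  rewrite a2normsq_star in Hplus.
  destruct (a2exp_surj _ Hplus) as [x Hx].
  assert (Hminus : a2sub a b = a2exp (a2opp (a2star x))).
  { apply (a2_inv_unique _ (a2star (a2exp x))); [rewrite Hx; exact Hab | apply a2exp_star_inv]. }
  exists x; unfold cosh_sinh_mat, a2cosh, a2sinh; rewrite Hx, <- Hminus.
  f_equal; apply A2_ext; a2_unfold; field.
Qed.

Lemma fixes_iff A x : fixes A x <->
  a2normsq (a2add (a2mul (mc A) x) (md A)) <> 0 /\
  a2add (a2mul (ma A) x) (mb A) = a2mul x (a2add (a2mul (mc A) x) (md A)).
Proof.
  unfold fixes, mobius; cbv zeta.
  set (den := a2add (a2mul (mc A) x) (md A)); set (num := a2add (a2mul (ma A) x) (mb A)).
  destruct Req_EM_T as [Hden | Hden]; split.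
  - discriminate.
  - intros [H _]; contradiction.
  - intros H; injection H as H; split; [exact Hden|].
    rewrite <- H, a2mul_assoc, a2mul_inv_l, a2mul_1_r by exact Hden; reflexivity.
  - intros [_ H]; rewrite H, a2mul_assoc, a2mul_inv_r, a2mul_1_r by exact Hden; reflexivity.
Qed.

Lemma sym_of_fixes_pm1 A :
  fixes A (a2real (-1)) -> fixes A (a2real 1) -> md A = ma A /\ mc A = mb A.
Proof.
  intros [_ Hm]%fixes_iff [_ Hp]%fixes_iff.
  apply A2_coords in Hm, Hp; a2_unfold; split; apply A2_ext; lra.
Qed.

Lemma fixes_pm1_of_vahlen_sym a b :
  vahlen (mkMat2 a b b a) ->
  fixes (mkMat2 a b b a) (a2real (-1)) /\ fixes (mkMat2 a b b a) (a2real 1).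
Proof.
  intros hA; destruct (a2normsq_neq0_of_mul_eq1 _ _ (vahlen_sym_mul a b hA)) as [Hminus Hplus].
  rewrite a2normsq_star in Hplus.
  split; apply fixes_iff; cbn [ma mb mc md].
  - replace (a2add (a2mul b (a2real (-1))) a) with (a2sub a b) by a2_ring.
    split; [exact Hminus | a2_ring].
  - replace (a2add (a2mul b (a2real 1)) a) with (a2add a b) by a2_ring.
    split; [exact Hplus | a2_ring].
Qed.

Lemma sym_of_cosh_sinh A x :
  A = cosh_sinh_mat x \/ mat_opp A = cosh_sinh_mat x -> md A = ma A /\ mc A = mb A.
Proof.
  intros [H | H];
    pose proof (f_equal ma H) as Ha; pose proof (f_equal mb H) as Hb;
    pose proof (f_equal mc H) as Hc; pose proof (f_equal md H) as Hd;
    cbn [ma mb mc md mat_opp cosh_sinh_mat] in Ha, Hb, Hc, Hd.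
  - split; congruence.
  - split; apply a2opp_inj; congruence.
Qed.

Theorem proposition3p3 (A : Mat2) (hA : vahlen A) :
  (fixes A (a2real (-1)) /\ fixes A (a2real 1)) <->
  exists x : A2, A = cosh_sinh_mat x \/ mat_opp A = cosh_sinh_mat x.
Proof.
  split.
  - intros [Hm Hp].
    destruct A as [a b c d].
    destruct (sym_of_fixes_pm1 _ Hm Hp) as [Hd Hc]; cbn [ma mb mc md] in Hd, Hc; subst d c.
    destruct (cosh_sinh_of_vahlen_sym a b hA) as [x Hx].
    exists x; left; exact Hx.
  - intros [x Hx].
    destruct A as [a b c d].
    destruct (sym_of_cosh_sinh _ x Hx) as [Hd Hc]; cbn [ma mb mc md] in Hd, Hc; subst d c.
    exact (fixes_pm1_of_vahlen_sym a b hA).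
Qed.
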